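(* Let $R$ be a quotient root system, let $\Phi\subseteq R^+$ be an inversion set, and suppose $\Phi = \Phi_1 \sqcup \Phi_2$ with $\Phi_1,\Phi_2$ disjoint inversion sets. If $C$ is a connected component of $G_\Phi^{\Phi^c}$, then $C \subseteq \Phi_1$ or $C \subseteq \Phi_2$.
   Context: A quotient root system (QRS) $R$ is the set of non-zero images of a root system $\Delta$ (with base $\Sigma$) under the orthogonal projection of its ambient Euclidean space onto $(\mathrm{span}\,J)^\perp$ for some $J\subsetneq\Sigma$; its base consists of the images of $\Sigma\setminus J$, and every root is an integer combination of the base with all coefficients $\ge0$ (positive roots, $R^+$) or all $\le0$. A subset $\Phi\subseteq R^+$ is closed if $\alpha,\beta\in\Phi$, $\alpha+\beta\in R$ imply $\alpha+\beta\in\Phi$; co-closed if $\Phi^c:=R^+\setminus\Phi$ is closed; an inversion set if both. $G_\Phi^{\Phi^c}$ is the graph with vertex set $\Phi$ where $\alpha,\alpha'$ are adjacent iff $\alpha-\alpha'\in\Phi^c\cup(-\Phi^c)$. *)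

From HB Require Import structures.
From mathcomp Require Import all_boot all_order all_algebra.
From mathcomp Require Import reals.
From Stdlib Require Import Relations.
Set Implicit Arguments. Unset Strict Implicit. Unset Printing Implicit Defensive.
Import Order.TTheory GRing.Theory Num.Theory.
Local Open Scope ring_scope.

Section QRS.
Variables (R : realType) (n : nat).
Notation V := 'rV[R]_n.

Definition dot (u v : V) : R := (u *m v^T) 0 0.

Definition in_span (S : seq V) (v : V) : Prop :=
  exists c : 'I_(size S) -> R, v = \sum_(i < size S) c i *: S`_i.

Definition lin_indep (S : seq V) : Prop :=
  forall c : 'I_(size S) -> R,
    \sum_(i < size S) c i *: S`_i = 0 -> forall i, c i = 0.

(* A (finite, crystallographic, reduced) root system, given by the finite list
   of its roots. *)
Definition is_root_system (D : seq V) : Prop :=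
  [/\ uniq D, (0 : V) \notin D,
      (forall a b, a \in D -> b \in D ->
         b - (2 * dot b a / dot a a) *: a \in D),
      (forall a b, a \in D -> b \in D ->
         exists z : int, 2 * dot b a / dot a a = z%:~R) &
      (forall a (c : R), a \in D -> c *: a \in D -> c = 1 \/ c = -1)].

Definition is_base (D Sigma : seq V) : Prop :=
  [/\ uniq Sigma, {subset Sigma <= D}, lin_indep Sigma &
      forall a, a \in D -> exists c : 'I_(size Sigma) -> int,
        a = \sum_(i < size Sigma) (c i)%:~R *: Sigma`_i /\
        ((forall i, 0 <= c i) \/ (forall i, c i <= 0))].

(* w is the orthogonal projection of v onto (span J)^perp *)
Definition oproj (J : seq V) (v w : V) : Prop :=
  in_span J (v - w) /\ forall j, j \in J -> dot w j = 0.

Variables (D Sigma J : seq V).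

(* The quotient root system: nonzero images of roots under the projection *)
Definition qrs (w : V) : Prop :=
  w != 0 /\ exists a, a \in D /\ oproj J a w.

(* positive roots of the quotient root system: nonnegative integer
   combinations of its base, the images of the elements of Sigma \ J *)
Definition qrs_pos (w : V) : Prop :=
  qrs w /\
  exists (c : 'I_(size Sigma) -> int) (ws : 'I_(size Sigma) -> V),
    [/\ forall i : 'I_(size Sigma), oproj J Sigma`_i (ws i),
        forall i : 'I_(size Sigma), 0 <= c i,
        forall i : 'I_(size Sigma), Sigma`_i \in J -> c i = 0 &
        w = \sum_(i < size Sigma) (c i)%:~R *: ws i].

Definition compl (Phi : V -> Prop) (x : V) : Prop := qrs_pos x /\ ~ Phi x.

Definition closed_set (Phi : V -> Prop) : Prop :=
  forall a b, Phi a -> Phi b -> qrs (a + b) -> Phi (a + b).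

Definition coclosed (Phi : V -> Prop) : Prop := closed_set (compl Phi).

Definition inversion_set (Phi : V -> Prop) : Prop :=
  [/\ forall x, Phi x -> qrs_pos x, closed_set Phi & coclosed Phi].

Definition gadj (Phi : V -> Prop) (a b : V) : Prop :=
  [/\ Phi a, Phi b & (compl Phi (a - b) \/ compl Phi (- (a - b)))].

Definition conn_component (Phi C : V -> Prop) : Prop :=
  exists v, Phi v /\
    forall x, C x <-> (Phi x /\ clos_refl_trans V (gadj Phi) v x).

End QRS.

From HB Require Import structures.
From mathcomp Require Import all_boot all_order all_algebra.
From mathcomp Require Import reals.
From Stdlib Require Import Relations.
Import Order.TTheory GRing.Theory Num.Theory.
Local Open Scope ring_scope.

(* No edge of G_Phi^{Phi^c} joins Phi1 to Phi2: if a in Phi1, b in Phi2 and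
   b - a in Phi^c, then a and b - a both lie in Phi2^c, hence so does their
   sum b by co-closedness of Phi2, a contradiction; the case a - b in Phi^c is
   symmetric, using Phi1.  So membership in Phi1 (resp. Phi2) propagates along
   paths and each component lies in one part. *)

Lemma clos_refl_trans_stable {T : Type} {r : relation T} {P : T -> Prop} :
  (forall a b, r a b -> P a -> P b) ->
  forall {a b}, clos_refl_trans T r a b -> P a -> P b.
Proof. by move=> rP a b; elim=> [x y /rP // | // | x y z _ Pxy _ Pyz /Pxy /Pyz]. Qed.

Section Separation.
Context {R : realType} {n : nat} {D Sigma J : seq 'rV[R]_n}.
Local Notation pos := (qrs_pos D Sigma J).
Local Notation compl := (compl D Sigma J).

Lemma coclosed_complDB {Q : 'rV[R]_n -> Prop} {a b : 'rV[R]_n} :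
  coclosed D Sigma J Q -> compl Q a -> compl Q (b - a) -> qrs D J b -> ~ Q b.
Proof. by move=> cQ ca cba qb; have [] := cQ _ _ ca cba; rewrite addrC subrK. Qed.

Lemma gadj_stable {Phi P Q : 'rV[R]_n -> Prop} :
  (forall x, Phi x <-> P x \/ Q x) -> (forall x, ~ (P x /\ Q x)) ->
  (forall x, P x -> pos x) -> (forall x, Q x -> pos x) ->
  coclosed D Sigma J P -> coclosed D Sigma J Q ->
  forall a b, gadj D Sigma J Phi a b -> P a -> P b.
Proof.
move=> hPhi disj Ppos Qpos cP cQ a b [_ Pb hab] Pa.
have complP x : compl Phi x -> compl P x.
  by case=> px nPhix; split=> // Px; apply/nPhix/hPhi; left.
have complQ x : compl Phi x -> compl Q x.
  by case=> px nPhix; split=> // Qx; apply/nPhix/hPhi; right.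
case/hPhi: Pb => // Qb; exfalso.
case: hab => [hab | hba].
- have cPb : compl P b by split; [exact: Qpos | move=> Pb; exact: (disj b)].
  exact: (coclosed_complDB cP cPb (complP _ hab) (proj1 (Ppos _ Pa)) Pa).
- rewrite opprB in hba.
  have cQa : compl Q a by split; [exact: Ppos | move=> Qa; exact: (disj a)].
  exact: (coclosed_complDB cQ cQa (complQ _ hba) (proj1 (Qpos _ Qb)) Qb).
Qed.

End Separation.

Theorem proposition4p2 (R : realType) (n : nat) (D Sigma J : seq 'rV[R]_n)
  (Phi Phi1 Phi2 C : 'rV[R]_n -> Prop) :
  is_root_system D -> is_base D Sigma ->
  {subset J <= Sigma} -> (exists s, s \in Sigma /\ s \notin J) ->
  inversion_set D Sigma J Phi ->
  inversion_set D Sigma J Phi1 -> inversion_set D Sigma J Phi2 ->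
  (forall x, Phi x <-> Phi1 x \/ Phi2 x) ->
  (forall x, ~ (Phi1 x /\ Phi2 x)) ->
  conn_component D Sigma J Phi C ->
  (forall x, C x -> Phi1 x) \/ (forall x, C x -> Phi2 x).
Proof.
move=> _ _ _ _ _ [pos1 _ cP1] [pos2 _ cP2] hPhi disj [v [Phiv HC]].
have hPhi21 x : Phi x <-> Phi2 x \/ Phi1 x by have := hPhi x; tauto.
have disj21 x : ~ (Phi2 x /\ Phi1 x) by have := disj x; tauto.
case/hPhi: Phiv => Pv; [left | right] => x /HC [_ vx].
- exact: (clos_refl_trans_stable (gadj_stable hPhi disj pos1 pos2 cP1 cP2) vx Pv).
- exact: (clos_refl_trans_stable (gadj_stable hPhi21 disj21 pos2 pos1 cP2 cP1) vx Pv).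
Qed.
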